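(* Every homothetic packing of $n\ge 3$ squares has at most $4n-8$ contacts.
   Context: Let $S=\{(x,y): -1\le x,y\le 1\}$. A homothetic packing of $n$ squares is a set $P=\{S_1,\ldots,S_n\}$ with $S_i=r_iS+p_i$, $r_i>0$, $p_i\in\mathbb{R}^2$, such that distinct squares have disjoint interiors. A contact is an unordered pair $\{i,j\}$, $i\ne j$, with $S_i\cap S_j\neq\emptyset$. *)

From HB Require Import structures.
From mathcomp Require Import all_boot all_order all_algebra.
From mathcomp Require Import boolp reals.
Set Implicit Arguments. Unset Strict Implicit. Unset Printing Implicit Defensive.
Import Order.TTheory GRing.Theory Num.Theory.
Local Open Scope ring_scope.

(* The square r S + p, where S = [-1,1]^2: closed square of centre p, half-side r. *)
Definition in_square (R : realType) (r : R) (p : R * R) (z : R * R) : Prop :=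
  `|z.1 - p.1| <= r /\ `|z.2 - p.2| <= r.

Definition in_square_int (R : realType) (r : R) (p : R * R) (z : R * R) : Prop :=
  `|z.1 - p.1| < r /\ `|z.2 - p.2| < r.

Definition homothetic_packing (R : realType) (n : nat)
    (r : 'I_n -> R) (p : 'I_n -> R * R) : Prop :=
  (forall i, 0 < r i) /\
  (forall i j, i != j -> forall z,
      ~ (in_square_int (r i) (p i) z /\ in_square_int (r j) (p j) z)).

Definition contact (R : realType) (n : nat)
    (r : 'I_n -> R) (p : 'I_n -> R * R) (i j : 'I_n) : Prop :=
  i != j /\ exists z, in_square (r i) (p i) z /\ in_square (r j) (p j) z.

Definition num_contacts (R : realType) (n : nat)
    (r : 'I_n -> R) (p : 'I_n -> R * R) : nat :=
  #|[set ij : 'I_n * 'I_n | (ij.1 < ij.2)%N && `[< contact r p ij.1 ij.2 >]]|.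

(* Only the side coordinates of the squares matter, so we argue about axis-parallel
   boxes with disjoint interiors.  Each contact either joins a box to its right
   neighbour along a vertical line (possibly at a single corner) or to its upper
   neighbour along a horizontal segment of positive length.  Every contact is charged
   to one of the 4n sides: a vertical contact to whichever of the two touching sides
   has its upper end strictly inside the other one (ties at level tops are broken by
   the boxes sitting at the common corner), a horizontal contact likewise comparing
   right ends.  No side is charged twice, since a second box charging it would
   overlap the first near that end.  On each axis at least four sides stay
   uncharged: the extreme left and right sides, and on every vertical line carrying
   sides the one whose box reaches highest (on horizontal lines, furthest right);
   for n >= 3 these supply four distinct sides per axis, whence at most 4n - 8
   contacts. *)

From HB Require Import structures.
From mathcomp Require Import all_boot all_order all_algebra.
From mathcomp Require Import boolp reals lra zify.
Set Implicit Arguments. Unset Strict Implicit. Unset Printing Implicit Defensive.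
Import Order.TTheory GRing.Theory Num.Theory.
Local Open Scope ring_scope.

Section FreeSidesOnAxis.
Variables (R : realType) (I : finType) (lo hi : I -> R).
Hypothesis lo_lt_hi : forall k, lo k < hi k.

Definition side_coord (s : I * bool) : R := if s.2 then hi s.1 else lo s.1.

Lemma four_le_card_free_sides (F : {set I * bool}) :
  (3 <= #|I|)%N ->
  (forall k, (forall k', lo k <= lo k') -> (k, false) \in F) ->
  (forall k, (forall k', hi k' <= hi k) -> (k, true) \in F) ->
  (forall s, exists2 s', s' \in F & side_coord s' = side_coord s) ->
  (4 <= #|F|)%N.
Proof.
move=> I3 Fmin Fmax Fcoord.
have [k0 _] : exists k0 : I, k0 \in I by apply/card_gt0P; apply: leq_trans I3.
pose a := [arg min_(k < k0) lo k]%O; pose b := [arg max_(k > k0) hi k]%O.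
have amin k : lo a <= lo k by rewrite /a; case: arg_minP => // m _; apply.
have bmax k : hi k <= hi b by rewrite /b; case: arg_maxP => // m _; apply.
(* Either some k has neither coordinate extremal, which gives two more coordinate
   values, or every k has an extremal coordinate, and all these sides lie in F. *)
have [[k [lok hik]] | extremal] :=
  pselect (exists k, lo k != lo a /\ hi k != hi b).
  have [s1 Fs1 cs1] := Fcoord (k, false); have [s2 Fs2 cs2] := Fcoord (k, true).
  have lt_ak : lo a < lo k by rewrite lt_neqAle eq_sym lok amin.
  have lt_kb : hi k < hi b by rewrite lt_neqAle hik bmax.
  pose l := [:: (a, false); s1; s2; (b, true)].
  have ul : uniq l.
    apply: (@map_uniq _ _ side_coord); apply: lt_sorted_uniq.
    by rewrite /= cs1 cs2 /side_coord /= lt_ak lo_lt_hi lt_kb.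
  rewrite cardE -[4%N]/(size l); apply: uniq_leq_size ul _ => s.
  by rewrite !inE mem_enum => /or4P [] /eqP ->; rewrite ?Fmin ?Fmax.
have {}extremal k : lo k = lo a \/ hi k = hi b.
  case: (eqVneq (lo k) (lo a)) => [|lok]; first by left.
  case: (eqVneq (hi k) (hi b)) => [|hik]; first by right.
  by case: extremal; exists k.
pose f k := (k, lo k != lo a).
have f_inj : injective f by move=> k k' /(congr1 fst).
have fF k : f k \in F.
  rewrite /f; case: eqP => [lok | /eqP lok]; first by apply: Fmin => k'; rewrite lok.
  case: (extremal k) => [/eqP|hik]; first by rewrite (negPf lok).
  by apply: Fmax => k'; rewrite hik.
have [e Fe e_new] : exists2 e, e \in F & e \notin f @: setT.
  case: (eqVneq (hi a) (hi b)) => hab.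
    exists (a, true); first by apply: Fmax => k'; rewrite hab.
    by apply/imsetP => -[k _ [<-]]; rewrite eqxx.
  have [s Fs cs] := Fcoord (a, true); exists s => //.
  apply/imsetP => -[k _ skf]; move: cs; rewrite skf /side_coord /=.
  case: (eqVneq (lo k) (lo a)) => [lok | lok] /= hka.
    by move: (lo_lt_hi a); rewrite -hka lok ltxx.
  case: (extremal k) => [/eqP|hkb]; first by rewrite (negPf lok).
  by move/eqP: hab; rewrite -hka hkb.
have sub : e |: f @: setT \subset F.
  by apply/subsetP => s; rewrite !inE => /orP [/eqP -> // | /imsetP [k _ ->]].
by apply: leq_trans (subset_leq_card sub); rewrite cardsU1 e_new card_imset // cardsT.
Qed.

End FreeSidesOnAxis.

Section BoxPacking.
Variables (R : realType) (I : finType) (xlo xhi ylo yhi : I -> R).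
Hypothesis xlo_lt_xhi : forall k, xlo k < xhi k.
Hypothesis ylo_lt_yhi : forall k, ylo k < yhi k.
Hypothesis boxes_separated : forall i j, i != j ->
  xhi i <= xlo j \/ xhi j <= xlo i \/ yhi i <= ylo j \/ yhi j <= ylo i.

Lemma boxes_overlap_eq i j :
  xlo i < xhi j -> xlo j < xhi i -> ylo i < yhi j -> ylo j < yhi i -> i = j.
Proof. by move=> *; apply/eqP/contraT => /boxes_separated; lra. Qed.

Definition boxes_meet i j : bool :=
  [&& xlo i <= xhi j, xlo j <= xhi i, ylo i <= yhi j & ylo j <= yhi i].

Definition touches_right i j : bool :=
  [&& xhi i == xlo j, ylo j <= yhi i & ylo i <= yhi j].

Definition touches_top i j : bool :=
  [&& yhi i == ylo j, xlo j < xhi i & xlo i < xhi j].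

Lemma touches_rightP i j : reflect
  [/\ xhi i = xlo j, ylo j <= yhi i & ylo i <= yhi j] (touches_right i j).
Proof. by apply: (iffP and3P) => -[/eqP]. Qed.

Lemma touches_topP i j : reflect
  [/\ yhi i = ylo j, xlo j < xhi i & xlo i < xhi j] (touches_top i j).
Proof. by apply: (iffP and3P) => -[/eqP]. Qed.

Lemma boxes_meet_touches i j : i != j -> boxes_meet i j ->
  [|| touches_right i j, touches_right j i, touches_top i j | touches_top j i].
Proof.
move=> /boxes_separated sep /and4P [x1 x2 y1 y2].
case: (eqVneq (xhi i) (xlo j)) => [e | nij]; first by apply/or4P/Or41/touches_rightP.
case: (eqVneq (xhi j) (xlo i)) => [e | nji]; first by apply/or4P/Or42/touches_rightP.
have lt_ji : xlo j < xhi i by rewrite lt_neqAle eq_sym nij x2.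
have lt_ij : xlo i < xhi j by rewrite lt_neqAle eq_sym nji x1.
have [e | e] : yhi i = ylo j \/ yhi j = ylo i by case: sep => [|[|[]]]; lra.
  by apply/or4P/Or43/touches_topP.
by apply/or4P/Or44/touches_topP.
Qed.

Definition touches (e : I * I * bool) : bool :=
  let: (i, j, vertical) := e in
  if vertical then touches_right i j else touches_top i j.

Definition left_side k : I * (bool * bool) := (k, (false, false)).
Definition right_side k : I * (bool * bool) := (k, (false, true)).
Definition bottom_side k : I * (bool * bool) := (k, (true, false)).
Definition top_side k : I * (bool * bool) := (k, (true, true)).

Definition xside (s : I * bool) : I * (bool * bool) := (s.1, (false, s.2)).
Definition yside (s : I * bool) : I * (bool * bool) := (s.1, (true, s.2)).

Definition diag_above i : bool :=
  [exists k, (xlo k == xhi i) && (ylo k == yhi i)].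

Definition flush_above i : bool :=
  [exists k, (xhi k == xhi i) && (ylo k == yhi i)].

(* At level tops the right side of i cannot be used when a box rests on the common
   corner (diag_above i), nor the left side of j when a box stands flush on i; if
   both happen, the top of i is covered by the flush box and takes the charge. *)
Definition charge_right i j :=
  if yhi i < yhi j then right_side i
  else if yhi j < yhi i then left_side j
  else if diag_above i && flush_above i then top_side i
  else if diag_above i then left_side j else right_side i.

Definition charge_top i j := if xhi i < xhi j then top_side i else bottom_side j.

Definition charge (e : I * I * bool) :=
  let: (i, j, vertical) := e in
  if vertical then charge_right i j else charge_top i j.

Lemma charge_eq_left_side i j b k :
  touches (i, j, b) -> charge (i, j, b) = left_side k ->
  [/\ b, j = k, touches_right i k &
      yhi k < yhi i \/ [/\ yhi i = yhi k, diag_above i & ~~ flush_above i]].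
Proof.
case: b => /= tij; last by rewrite /charge_top; case: ifP.
rewrite /charge_right; case: ltgtP => [//|hlt|heq]; first by case=> <-; split => //; left.
by case: (diag_above i) (flush_above i) => [] [] //= [<-]; split => //; right.
Qed.

Lemma charge_eq_right_side i j b k :
  touches (i, j, b) -> charge (i, j, b) = right_side k ->
  [/\ b, i = k, touches_right k j & yhi k < yhi j \/ yhi k = yhi j /\ ~~ diag_above k].
Proof.
case: b => /= tij; last by rewrite /charge_top; case: ifP.
rewrite /charge_right; case: ltgtP => [hlt [<-]|//|heq]; first by split => //; left.
by case D: (diag_above i); case: (flush_above i) => //= -[<-];
  split => //; right; rewrite D.
Qed.

Lemma charge_eq_top_side i j b k :
  touches (i, j, b) -> charge (i, j, b) = top_side k ->
  i = k /\
  ([/\ b, touches_right k j, yhi k = yhi j, diag_above k & flush_above k] \/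
   [/\ ~~ b, touches_top k j & xhi k < xhi j]).
Proof.
case: b => /= tij.
  rewrite /charge_right; case: ltgtP => [//|//|heq].
  by case D: (diag_above i); case F: (flush_above i) => //= -[<-]; split => //; left.
by rewrite /charge_top; case: ifP => // hlt [<-]; split => //; right.
Qed.

Lemma charge_eq_bottom_side i j b k :
  touches (i, j, b) -> charge (i, j, b) = bottom_side k ->
  [/\ ~~ b, j = k, touches_top i k & xhi k <= xhi i].
Proof.
case: b => /= tij.
  rewrite /charge_right; case: ltgtP => [//|//|heq].
  by case: (diag_above i) (flush_above i) => [] [].
by rewrite /charge_top; case: ltP => // hle [<-].
Qed.

Lemma diag_aboveI i k : xlo k = xhi i -> ylo k = yhi i -> diag_above i.
Proof. by move=> hx hy; apply/existsP; exists k; rewrite hx hy !eqxx. Qed.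

Lemma flush_aboveI i k : xhi k = xhi i -> ylo k = yhi i -> flush_above i.
Proof. by move=> hx hy; apply/existsP; exists k; rewrite hx hy !eqxx. Qed.

Lemma diag_above_touches_top k j : diag_above k -> touches_top k j -> xhi j <= xhi k.
Proof.
case/existsP => d /andP [/eqP dx /eqP dy] /touches_topP [hy hx1 hx2].
rewrite leNgt; apply/negP => hlt.
have djeq : d = j.
  by apply: boxes_overlap_eq; move: (xlo_lt_xhi d) (ylo_lt_yhi d) (ylo_lt_yhi j); lra.
by move: hx1; rewrite -djeq dx ltxx.
Qed.

Lemma charged_left_side_inj e e' k : touches e -> touches e' ->
  charge e = left_side k -> charge e' = left_side k -> e = e'.
Proof.
have ylo_lt i i' : touches_right i k -> touches_right i' k ->
    yhi k < yhi i \/ [/\ yhi i = yhi k, diag_above i & ~~ flush_above i] ->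
    ylo i' < yhi i.
  move=> /touches_rightP [hx hy1 hy2] /touches_rightP [hx' hy1' hy2'].
  case=> [|[hik _ nf]]; first lra.
  rewrite lt_neqAle; apply/andP; split; last lra.
  by apply: contraNneq nf => hi'; apply: (@flush_aboveI i i'); lra.
case: e e' => [[i j] b] [[i' j'] b'] te te' ce ce'.
have [-> -> ti hc] := charge_eq_left_side te ce.
have [-> -> ti' hc'] := charge_eq_left_side te' ce'.
have same_xhi : xhi i = xhi i'.
  by case/touches_rightP: ti => -> _ _; case/touches_rightP: ti' => -> _ _.
rewrite (@boxes_overlap_eq i i') ?(ylo_lt i' i) ?(ylo_lt i i') //.
  by rewrite -same_xhi xlo_lt_xhi.
by rewrite same_xhi xlo_lt_xhi.
Qed.

Lemma charged_right_side_inj e e' k : touches e -> touches e' ->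
  charge e = right_side k -> charge e' = right_side k -> e = e'.
Proof.
have ylo_lt j j' : touches_right k j -> touches_right k j' ->
    yhi k < yhi j \/ yhi k = yhi j /\ ~~ diag_above k -> ylo j' < yhi j.
  move=> /touches_rightP [hx hy1 hy2] /touches_rightP [hx' hy1' hy2'].
  case=> [|[hkj nd]]; first lra.
  rewrite lt_neqAle; apply/andP; split; last lra.
  by apply: contraNneq nd => hj'; apply: (@diag_aboveI k j'); lra.
case: e e' => [[i j] b] [[i' j'] b'] te te' ce ce'.
have [-> -> tj hc] := charge_eq_right_side te ce.
have [-> -> tj' hc'] := charge_eq_right_side te' ce'.
have same_xlo : xlo j = xlo j'.
  by case/touches_rightP: tj => <- _ _; case/touches_rightP: tj' => <- _ _.
rewrite (@boxes_overlap_eq j j') ?(ylo_lt j' j) ?(ylo_lt j j') //.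
  by rewrite same_xlo xlo_lt_xhi.
by rewrite -same_xlo xlo_lt_xhi.
Qed.

Lemma charged_top_side_inj e e' k : touches e -> touches e' ->
  charge e = top_side k -> charge e' = top_side k -> e = e'.
Proof.
case: e e' => [[i j] b] [[i' j'] b'] te te' ce ce'.
have [-> hc] := charge_eq_top_side te ce; have [-> hc'] := charge_eq_top_side te' ce'.
case: hc hc' => [[-> tj hj dk _] | [/negPf -> tj hj]]
                [[-> tj' hj' dk' _] | [/negPf -> tj' hj']].
- case/touches_rightP: tj => hx hy1 hy2; case/touches_rightP: tj' => hx' hy1' hy2'.
  by rewrite (@boxes_overlap_eq j j') //;
    move: (xlo_lt_xhi j) (xlo_lt_xhi j') (ylo_lt_yhi j) (ylo_lt_yhi j'); lra.
- by exfalso; move: (diag_above_touches_top dk tj'); lra.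
- by exfalso; move: (diag_above_touches_top dk' tj); lra.
- case/touches_topP: tj => hy hx1 hx2; case/touches_topP: tj' => hy' hx1' hx2'.
  by rewrite (@boxes_overlap_eq j j') //; move: (ylo_lt_yhi j) (ylo_lt_yhi j'); lra.
Qed.

Lemma charged_bottom_side_inj e e' k : touches e -> touches e' ->
  charge e = bottom_side k -> charge e' = bottom_side k -> e = e'.
Proof.
case: e e' => [[i j] b] [[i' j'] b'] te te' ce ce'.
have [/negPf -> -> /touches_topP [hy hx1 hx2] hi] := charge_eq_bottom_side te ce.
have [/negPf -> -> /touches_topP [hy' hx1' hx2'] hi'] := charge_eq_bottom_side te' ce'.
by rewrite (@boxes_overlap_eq i i') //; move: (ylo_lt_yhi i) (ylo_lt_yhi i'); lra.
Qed.

Definition contacts := [set e | touches e].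

Lemma charge_inj : {in contacts &, injective charge}.
Proof.
move=> e e'; rewrite !inE => te te' E.
case ce: (charge e) (E) => [k [[] []]] /esym ce'.
- exact: charged_top_side_inj te te' ce ce'.
- exact: charged_bottom_side_inj te te' ce ce'.
- exact: charged_right_side_inj te te' ce ce'.
- exact: charged_left_side_inj te te' ce ce'.
Qed.

Definition charged := charge @: contacts.

Lemma notin_charged s :
  (forall i j b, touches (i, j, b) -> charge (i, j, b) = s -> False) ->
  s \notin charged.
Proof.
by move=> h; apply/imsetP => -[[[i j] b]]; rewrite inE => te /esym /(h _ _ _ te).
Qed.

Lemma min_left_side_free k :
  (forall k', xlo k <= xlo k') -> left_side k \notin charged.
Proof.
move=> kmin; apply: notin_charged => i j b te /(charge_eq_left_side te) [_ _ + _].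
by case/touches_rightP => hx _ _; move: (kmin i) (xlo_lt_xhi i); lra.
Qed.

Lemma max_right_side_free k :
  (forall k', xhi k' <= xhi k) -> right_side k \notin charged.
Proof.
move=> kmax; apply: notin_charged => i j b te /(charge_eq_right_side te) [_ _ + _].
by case/touches_rightP => hx _ _; move: (kmax j) (xlo_lt_xhi j); lra.
Qed.

Lemma min_bottom_side_free k :
  (forall k', ylo k <= ylo k') -> bottom_side k \notin charged.
Proof.
move=> kmin; apply: notin_charged => i j b te /(charge_eq_bottom_side te) [_ _ + _].
by case/touches_topP => hy _ _; move: (kmin i) (ylo_lt_yhi i); lra.
Qed.

Lemma max_top_side_free k :
  (forall k', yhi k' <= yhi k) -> top_side k \notin charged.
Proof.
move=> kmax; apply: notin_charged => i j b te /(charge_eq_top_side te) [_ hc].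
case: hc => [[_ _ _ _ /existsP [d /andP [_ /eqP hd]]] | [_ /touches_topP [hy _ _] _]].
  by move: (kmax d) (ylo_lt_yhi d); lra.
by move: (kmax j) (ylo_lt_yhi j); lra.
Qed.

Lemma free_xside_at s : exists2 s', xside s' \notin charged &
  side_coord xlo xhi s' = side_coord xlo xhi s.
Proof.
set c := side_coord xlo xhi s.
pose m := [arg max_(s' > s | side_coord xlo xhi s' == c) yhi s'.1]%O.
have [mc mmax] : side_coord xlo xhi m = c /\
    forall k b, side_coord xlo xhi (k, b) = c -> yhi k <= yhi m.1.
  by rewrite /m; case: arg_maxP => //= m' /eqP mc' mmax'; split=> // k b /eqP /mmax'.
have [[k [xk yk]] | no_left] := pselect (exists k, xlo k = c /\ yhi k = yhi m.1).
  exists (k, false) => //; apply: notin_charged => i j b te.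
  case/(charge_eq_left_side te) => _ _ /touches_rightP [hx _ _] hc.
  have := mmax i true; rewrite /side_coord /= hx xk => /(_ erefl) hi.
  case: hc => [|[hik /existsP [d /andP [/eqP dx /eqP dy]] _]]; first lra.
  have := mmax d false; rewrite /side_coord /= dx hx xk => /(_ erefl).
  by move: (ylo_lt_yhi d); lra.
case: m mc mmax no_left => km [] /= mc mmax no_left; rewrite /side_coord /= in mc;
  last by case: no_left; exists km.
exists (km, true) => //; apply: notin_charged => i j b te.
case/(charge_eq_right_side te) => _ _ /touches_rightP [hx _ _] hc.
have := mmax j false; rewrite /side_coord /= -hx mc => /(_ erefl) hj.
by case: hc => [|[hij _]]; [lra | apply: no_left; exists j; split; lra].
Qed.

Lemma free_yside_at s : exists2 s', yside s' \notin charged &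
  side_coord ylo yhi s' = side_coord ylo yhi s.
Proof.
set c := side_coord ylo yhi s.
pose m := [arg max_(s' > s | side_coord ylo yhi s' == c) xhi s'.1]%O.
have [mc mmax] : side_coord ylo yhi m = c /\
    forall k b, side_coord ylo yhi (k, b) = c -> xhi k <= xhi m.1.
  by rewrite /m; case: arg_maxP => //= m' /eqP mc' mmax'; split=> // k b /eqP /mmax'.
have [[k [yk xk]] | no_top] := pselect (exists k, yhi k = c /\ xhi k = xhi m.1).
  exists (k, true) => //; apply: notin_charged => i j b te.
  case/(charge_eq_top_side te) => _ [[_ _ _ /existsP [d /andP [/eqP dx /eqP dy]] _] |
                                   [_ /touches_topP [hy _ _] hx]].
    have := mmax d false; rewrite /side_coord /= dy yk => /(_ erefl).
    by move: (xlo_lt_xhi d); lra.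
  by have := mmax j false; rewrite /side_coord /= -hy yk => /(_ erefl); lra.
case: m mc mmax no_top => km [] /= mc mmax no_top; rewrite /side_coord /= in mc.
  by case: no_top; exists km.
exists (km, false) => //; apply: notin_charged => i j b te.
case/(charge_eq_bottom_side te) => _ _ /touches_topP [hy _ _] hi.
have := mmax i true; rewrite /side_coord /= hy mc => /(_ erefl) hi'.
by apply: no_top; exists i; split; lra.
Qed.

Lemma card_contacts_le : (3 <= #|I|)%N -> (#|contacts| <= 4 * #|I| - 8)%N.
Proof.
move=> I3.
pose Fx := [set s | xside s \notin charged]; pose Fy := [set s | yside s \notin charged].
have Fx4 : (4 <= #|Fx|)%N.
  apply: (four_le_card_free_sides xlo_lt_xhi I3) => [k kmin | k kmax | s].
  - by rewrite inE; apply: min_left_side_free.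
  - by rewrite inE; apply: max_right_side_free.
  - by have [s' ? ?] := free_xside_at s; exists s'; rewrite ?inE.
have Fy4 : (4 <= #|Fy|)%N.
  apply: (four_le_card_free_sides ylo_lt_yhi I3) => [k kmin | k kmax | s].
  - by rewrite inE; apply: min_bottom_side_free.
  - by rewrite inE; apply: max_top_side_free.
  - by have [s' ? ?] := free_yside_at s; exists s'; rewrite ?inE.
have free8 : (#|Fx| + #|Fy| <= #|~: charged|)%N.
  have xside_inj : injective xside by move=> [? ?] [? ?] [-> ->].
  have yside_inj : injective yside by move=> [? ?] [? ?] [-> ->].
  rewrite -(card_imset Fx xside_inj) -(card_imset Fy yside_inj) -cardsUI.
  have -> : xside @: Fx :&: yside @: Fy = set0.
    by apply/setP => s; rewrite !inE; apply/andP => -[/imsetP [a _ ->] /imsetP [b _ []]].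
  rewrite cards0 addn0; apply: subset_leq_card; apply/subsetP => s.
  by rewrite !inE => /orP [] /imsetP [a]; rewrite inE => + ->.
have total : (#|charged| + #|~: charged| = 4 * #|I|)%N.
  by rewrite cardsC !card_prod card_bool mulnC.
rewrite -(card_in_imset charge_inj) -/charged; lia.
Qed.

Lemma card_meeting_pairs_le (P : {set I * I}) : (3 <= #|I|)%N ->
  (forall i j, (i, j) \in P -> [&& i != j, boxes_meet i j & (j, i) \notin P]) ->
  (#|P| <= 4 * #|I| - 8)%N.
Proof.
move=> I3 hP.
pose orient (ij : I * I) : I * I * bool :=
  let: (i, j) := ij in
  if touches_right i j then (i, j, true) else if touches_right j i then (j, i, true)
  else if touches_top i j then (i, j, false) else (j, i, false).
have orient_contact ij : ij \in P -> orient ij \in contacts.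
  case: ij => i j /hP /and3P [nij mij _]; rewrite inE /orient.
  by move: (boxes_meet_touches nij mij); do 3!case: ifP => //=.
have orient_pair i j : (orient (i, j)).1 = (i, j) \/ (orient (i, j)).1 = (j, i).
  by rewrite /orient; do ?case: ifP => _; by [left | right].
have orient_inj : {in P &, injective orient}.
  move=> [i j] [i' j'] Pij Pij' E.
  have /and3P [_ _ Pji'] := hP _ _ Pij'.
  have := orient_pair i j; rewrite E.
  case: (orient_pair i' j') => -> [] [? ?]; subst => //;
  by rewrite Pij in Pji'.
apply: leq_trans (card_contacts_le I3).
rewrite -(card_in_imset orient_inj); apply/subset_leq_card/subsetP => e.
by case/imsetP => ij Pij ->; apply: orient_contact.
Qed.

End BoxPacking.

Lemma centered_intervals_meet (R : realType) (c c' r r' : R) : 0 < r -> 0 < r' ->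
  `|c - c'| < r + r' -> exists z, `|z - c| < r /\ `|z - c'| < r'.
Proof.
move=> r0 r'0; rewrite ltr_norml => /andP [h1 h2].
case: (lerP (c - r) (c' - r')) => h3; case: (lerP (c + r) (c' + r')) => h4;
  [ exists ((c' - r' + (c + r)) / 2) | exists ((c' - r' + (c' + r')) / 2)
  | exists ((c - r + (c + r)) / 2) | exists ((c - r + (c' + r')) / 2) ];
  by rewrite !ltr_norml; split; apply/andP; split; lra.
Qed.

Section SquarePacking.
Variables (R : realType) (n : nat) (r : 'I_n -> R) (p : 'I_n -> R * R).

Local Notation xlo := (fun k => (p k).1 - r k).
Local Notation xhi := (fun k => (p k).1 + r k).
Local Notation ylo := (fun k => (p k).2 - r k).
Local Notation yhi := (fun k => (p k).2 + r k).

Lemma packing_separated : homothetic_packing r p -> forall i j, i != j ->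
  xhi i <= xlo j \/ xhi j <= xlo i \/ yhi i <= ylo j \/ yhi j <= ylo i.
Proof.
move=> [rpos disj] i j nij /=.
case: (lerP ((p i).1 + r i) ((p j).1 - r j)) => [|h1]; first by left.
case: (lerP ((p j).1 + r j) ((p i).1 - r i)) => [|h2]; first by right; left.
case: (lerP ((p i).2 + r i) ((p j).2 - r j)) => [|h3]; first by right; right; left.
case: (lerP ((p j).2 + r j) ((p i).2 - r i)) => [|h4]; first by right; right; right.
have near_x : `|(p i).1 - (p j).1| < r i + r j.
  by rewrite ltr_norml; apply/andP; split; lra.
have near_y : `|(p i).2 - (p j).2| < r i + r j.
  by rewrite ltr_norml; apply/andP; split; lra.
have [zx [hxi hxj]] := centered_intervals_meet (rpos i) (rpos j) near_x.
have [zy [hyi hyj]] := centered_intervals_meet (rpos i) (rpos j) near_y.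
by case: (disj i j nij (zx, zy)).
Qed.

Lemma contact_boxes_meet i j : contact r p i j -> boxes_meet xlo xhi ylo yhi i j.
Proof.
case=> _ [z [[]]]; rewrite !ler_norml => /andP [? ?] /andP [? ?] [].
by rewrite !ler_norml => /andP [? ?] /andP [? ?]; apply/and4P; split; lra.
Qed.

End SquarePacking.

Theorem proposition13 (R : realType) (n : nat)
    (r : 'I_n -> R) (p : 'I_n -> R * R) :
  (3 <= n)%N -> homothetic_packing r p ->
  (num_contacts r p <= 4 * n - 8)%N.
Proof.
move=> n3 pack; have [rpos _] := pack.
have xlo_lt_xhi k : (p k).1 - r k < (p k).1 + r k by move: (rpos k); lra.
have ylo_lt_yhi k : (p k).2 - r k < (p k).2 + r k by move: (rpos k); lra.
rewrite -{2}(card_ord n).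
apply: (card_meeting_pairs_le xlo_lt_xhi ylo_lt_yhi (packing_separated pack)).
  by rewrite card_ord.
move=> i j; rewrite !inE /= => /andP [lt_ij /asboolP cij].
by rewrite (contact_boxes_meet cij) cij.1 ltnNge (ltnW lt_ij).
Qed.
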